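(* Let $(Q,Z)$ be a locally gentle pair and let $v,w\in Q_0$ be distinct relational vertices. Let $x=v^{w}\in Q^{w}_0$ and $y=w^{v}\in Q^{v}_0$. Then there is a quiver isomorphism $(Q^{w})^{x}\to (Q^{v})^{y}$ which maps $(Z^{w})^{x}$ onto $(Z^{v})^{y}$.
   Context: A quiver $Q$ has vertex set $Q_0$, arrow set $Q_1$, head and tail maps $h,t$. $Z$ is a set of paths of length $2$; a path is admissible if no element of $Z$ is a subpath. $(Q,Z)$ is locally gentle if every vertex is head of at most two and tail of at most two arrows, and for each arrow $b$ there is at most one admissible and at most one inadmissible length-2 path of the form $cb$, and likewise of the form $ba$. A vertex $v$ is relational if some $ba\in Z$ has $t(b)=v=h(a)$. For such $v$ let $b,a$ be as stated, $c$ the other arrow with head $v$ (if any), $d$ the other arrow with tail $v$ (if any). The levee $(Q^v,Z^v)$ at $v$: vertices $u^v$ ($u\neq v$) plus two new distinct vertices $v(\sharp),v(\flat)$; arrows $e^v$ ($e\in Q_1$) with heads/tails $h(e)^v$, $t(e)^v$ when these are not $v$, and otherwise $t^v(b^v)=v(\sharp)=h^v(c^v)$, $t^v(d^v)=v(\flat)=h^v(a^v)$ (whenever the arrows exist); $Z^v=\{m^vn^v: mn\in Z,\ t(m)\neq v\}$. The levee of a locally gentle pair is locally gentle, and in the situation of the claim $x$ is relational in $(Q^w,Z^w)$ and $y$ is relational in $(Q^v,Z^v)$, so the iterated levees are defined. *)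

From mathcomp Require Import all_boot.


Record quiver := Quiver {
  vert : finType;
  arr : finType;
  qhead : arr -> vert;
  qtail : arr -> vert }.
Arguments qhead {q} _.
Arguments qtail {q} _.
Arguments Quiver : clear implicits.

(* A set Z of paths of length 2 is given as a relation on arrows:
   [Z b a] means that the path  b a  (first a, then b; t(b) = h(a)) is in Z. *)

Definition paths2 {Q : quiver} (Z : rel (arr Q)) : Prop :=
  forall b a, Z b a -> qtail b = qhead a.

Definition locally_gentle {Q : quiver} (Z : rel (arr Q)) : Prop :=
  [/\ paths2 Z,
      (forall v : vert Q, #|[set e | qhead e == v]| <= 2),
      (forall v : vert Q, #|[set e | qtail e == v]| <= 2),
      (forall b : arr Q,
          #|[set c | (qtail c == qhead b) && ~~ Z c b]| <= 1 /\
          #|[set c | (qtail c == qhead b) && Z c b]| <= 1) &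
      (forall b : arr Q,
          #|[set a | (qhead a == qtail b) && ~~ Z b a]| <= 1 /\
          #|[set a | (qhead a == qtail b) && Z b a]| <= 1)].

Definition relational {Q : quiver} (Z : rel (arr Q)) (v : vert Q) : Prop :=
  exists b a, [/\ Z b a, qtail b = v & qhead a = v].

(* Vertices of the levee at v:  u^v for u <> v  (inl), and the two new
   vertices v(sharp) = inr true, v(flat) = inr false. *)
Definition levV {Q : quiver} (v : vert Q) : finType :=
  ({u : vert Q | u != v} + bool)%type.

Definition lev_old {Q : quiver} {v u : vert Q} (H : u != v) : levV v :=
  inl (exist (fun u => u != v) u H).

Definition v_sharp {Q : quiver} (v : vert Q) : levV v := inr true.
Definition v_flat {Q : quiver} (v : vert Q) : levV v := inr false.

Definition lev_map {Q : quiver} (v u : vert Q) (s : bool) : levV v :=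
  if insub u is Some x then inl x else inr s.

(* The levee at v, w.r.t. the chosen relation  b a  in Z with t(b) = v = h(a).
   The arrows are the e^v, e in Q_1 (same arrow type).
   Heads: h(a^v) = v(flat), h(c^v) = v(sharp) for the other arrow c with qhead v.
   Tails: t(b^v) = v(sharp), t(d^v) = v(flat) for the other arrow d with qtail v. *)
Definition levee {Q : quiver} (v : vert Q) (b a : arr Q) : quiver :=
  Quiver (levV v) (arr Q)
    (fun e => lev_map v (qhead e) (e != a))
    (fun e => lev_map v (qtail e) (e == b)).

Definition leveeZ {Q : quiver} (Z : rel (arr Q)) (v : vert Q) (b a : arr Q)
  : rel (arr (levee v b a)) :=
  fun m n => Z m n && (qtail (q:=Q) m != v).

Definition quiver_iso {Q1 Q2 : quiver} (fV : vert Q1 -> vert Q2)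
  (fA : arr Q1 -> arr Q2) : Prop :=
  [/\ bijective fV, bijective fA,
      (forall e, qhead (fA e) = fV (qhead e)) &
      (forall e, qtail (fA e) = fV (qtail e))].

From mathcomp Require Import all_boot.

(** In a locally gentle pair the relations at a vertex [u] are either equal or
    share no arrow, and in the latter case the two arrows into (out of) [u] are
    exactly their two first (last) arrows.  Hence the levee at [u] does not
    depend on the chosen relation, except that changing it may swap the roles of
    the two new vertices.  Leveeing at [v] and at [w] act on disjoint parts of
    the quiver, so both iterated levees split [v] and [w] in the same way; the
    isomorphism is the identity on arrows and on the old vertices, and swaps
    the new vertices at [v] (resp. [w]) exactly when the relations chosen there
    differ. *)

Set Implicit Arguments.
Unset Strict Implicit.
Unset Printing Implicit Defensive.

Lemma card_le2_mem (T : finType) (S : {set T}) (a1 a2 e : T) :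
  #|S| <= 2 -> a1 \in S -> a2 \in S -> e \in S -> a1 != a2 -> e = a1 \/ e = a2.
Proof.
move=> S_le2 a1S a2S eS a12.
have [->|ea1] := eqVneq e a1; first by left.
have [->|ea2] := eqVneq e a2; first by right.
suff: 2 < #|S| by rewrite ltnNge S_le2.
by apply/card_gt2P; exists a1, a2, e; do 2!split=> //; rewrite eq_sym.
Qed.

Section LocallyGentle.

Variables (Q : quiver) (Z : rel (arr Q)).
Hypothesis gentleZ : locally_gentle Z.

Lemma gentle_rel_out_uniq b1 b2 a : Z b1 a -> Z b2 a -> b1 = b2.
Proof.
case: gentleZ => pathsZ _ _ outZ _ Z1 Z2.
case: (outZ a) => _ /card_le1_eqP; apply;
  by rewrite inE; apply/andP; split=> //; apply/eqP; apply: pathsZ.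
Qed.

Lemma gentle_rel_in_uniq b a1 a2 : Z b a1 -> Z b a2 -> a1 = a2.
Proof.
case: gentleZ => pathsZ _ _ _ inZ Z1 Z2.
case: (inZ b) => _ /card_le1_eqP; apply;
  by rewrite inE; apply/andP; split=> //; apply/eqP/esym; apply: pathsZ.
Qed.

Lemma gentle_head_flag u b1 a1 b2 a2 e :
  Z b1 a1 -> Z b2 a2 -> qhead a1 = u -> qhead a2 = u -> qhead e = u ->
  (e != a2) = (e != a1) (+) (a1 != a2).
Proof.
case: gentleZ => _ headsZ _ _ _ _ _ h1 h2 he.
have [<-|a12] := eqVneq a1 a2; first by rewrite addbF.
have inS f : qhead f = u -> f \in [set f | qhead f == u] by rewrite inE => ->.
have [->|->] := card_le2_mem (headsZ u) (inS _ h1) (inS _ h2) (inS _ he) a12.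
  by rewrite eqxx a12.
by rewrite eqxx eq_sym a12.
Qed.

Lemma gentle_tail_flag u b1 a1 b2 a2 e :
  Z b1 a1 -> Z b2 a2 -> qtail b1 = u -> qtail b2 = u -> qtail e = u ->
  (e == b2) = (e == b1) (+) (a1 != a2).
Proof.
move=> Z1 Z2 t1 t2 te; have [a12|a12] := eqVneq a1 a2.
  by rewrite a12 in Z1; rewrite (gentle_rel_out_uniq Z1 Z2) addbF.
have b12 : b1 != b2.
  apply: contraNneq a12 => b12; rewrite b12 in Z1.
  exact/eqP/(gentle_rel_in_uniq Z1 Z2).
case: gentleZ => _ _ tailsZ _ _.
have inS f : qtail f = u -> f \in [set f | qtail f == u] by rewrite inE => ->.
have [->|->] := card_le2_mem (tailsZ u) (inS _ t1) (inS _ t2) (inS _ te) b12.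
  by rewrite eqxx (negbTE b12).
by rewrite eqxx eq_sym (negbTE b12).
Qed.

End LocallyGentle.

Section LeveeVertices.

Variables (Q : quiver) (v : vert Q).

Lemma lev_map_new s : lev_map v v s = inr s.
Proof. by rewrite /lev_map insubF // eqxx. Qed.

Lemma lev_map_eq u s1 s2 : u != v -> lev_map v u s1 = lev_map v u s2.
Proof. by move=> uv; rewrite /lev_map insubT. Qed.

Lemma lev_map_eq_old u w s (wv : w != v) :
  (lev_map v u s == lev_old wv) = (u == w).
Proof.
rewrite /lev_map; case: insubP => [[u' u'v] _ <- | /negbNE/eqP->] /=.
  by apply/eqP/eqP => [[]|uw] //; congr inl; apply: val_inj.
by rewrite [v == w]eq_sym (negbTE wv).
Qed.

Lemma eq_lev_map_old u w s (wv : w != v) : lev_map v u s = lev_old wv -> u = w.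
Proof. by move/eqP; rewrite lev_map_eq_old => /eqP. Qed.

Definition lev_unmap (p : levV v) : vert Q * bool :=
  match p with inl u => (val u, false) | inr s => (v, s) end.

Lemma lev_unmapK p : lev_map v (lev_unmap p).1 (lev_unmap p).2 = p.
Proof.
by case: p => [[u uv]|s] /=; rewrite ?lev_map_new // /lev_map insubT.
Qed.

Lemma lev_unmap_map u s : lev_unmap (lev_map v u s) = (u, (u == v) && s).
Proof.
rewrite /lev_map; case: insubP => [u' /negbTE-> <- | /negbNE/eqP->] //=.
by rewrite eqxx.
Qed.

End LeveeVertices.

(** [lev_map2 x u s t] is the vertex [u] of [Q] seen in [(Q^w)^x]: [t] picks
    the new vertex of [Q^w] when [u = w], and [s] that of [(Q^w)^x] when [u] is
    the vertex underlying [x]. *)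
Definition lev_map2 (Q : quiver) (w : vert Q) (b a : arr Q)
    (x : vert (levee w b a)) (u : vert Q) (s t : bool) : levV x :=
  lev_map x (lev_map w u t) s.
Arguments lev_map2 {Q w b a} x u s t.

Section DoubleLevee.

Variables (Q : quiver) (v w : vert Q) (vw : v != w) (b a : arr Q).

Local Notation x := (lev_old vw : vert (levee w b a)).

Lemma lev_map2_eq u s1 t1 s2 t2 :
    (u = v -> s1 = s2) -> (u = w -> t1 = t2) ->
  lev_map2 x u s1 t1 = lev_map2 x u s2 t2.
Proof.
rewrite /lev_map2 => eq_s eq_t.
have [uv|uv] := eqVneq u v.
  by rewrite (eq_s uv) uv (lev_map_eq t1 t2 vw).
have [uw|uw] := eqVneq u w.
  by rewrite (eq_t uw); apply: lev_map_eq; rewrite lev_map_eq_old.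
by rewrite (lev_map_eq t1 t2 uw); apply: lev_map_eq; rewrite lev_map_eq_old.
Qed.

Lemma lev_map2_surj (p : levV x) : exists u s t, p = lev_map2 x u s t.
Proof.
set p1 := (lev_unmap p).1.
exists (lev_unmap p1).1, (lev_unmap p).2, (lev_unmap p1).2.
by rewrite /lev_map2 !lev_unmapK.
Qed.

End DoubleLevee.

(** [kv] ([kw]) tells whether the new vertices at [v] ([w]) are swapped. *)
Definition lev_swap (Q : quiver) (v w : vert Q) (bv av bw aw : arr Q)
    (x : vert (levee w bw aw)) (y : vert (levee v bv av)) (kv kw : bool)
    (p : levV x) : levV y :=
  let (p1, s) := lev_unmap p in
  let (u, t) := lev_unmap p1 in lev_map2 y u (t (+) kw) (s (+) kv).
Arguments lev_swap {Q v w bv av bw aw} x y kv kw p.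

Section Swap.

Variables (Q : quiver) (v w : vert Q) (vw : v != w) (wv : w != v).
Variables (bv av bw aw : arr Q) (kv kw : bool).

Local Notation x := (lev_old vw : vert (levee w bw aw)).
Local Notation y := (lev_old wv : vert (levee v bv av)).

Lemma lev_swap_map2E u s t :
  lev_swap x y kv kw (lev_map2 x u s t) = lev_map2 y u (t (+) kw) (s (+) kv).
Proof.
rewrite /lev_swap /lev_map2 !lev_unmap_map lev_map_eq_old.
by apply: lev_map2_eq => ->; rewrite eqxx.
Qed.

Lemma lev_swap_map2 u s t s' t' :
    (u = w -> s' = t (+) kw) -> (u = v -> t' = s (+) kv) ->
  lev_swap x y kv kw (lev_map2 x u s t) = lev_map2 y u s' t'.
Proof.
move=> eq_s eq_t; rewrite lev_swap_map2E.
by apply: lev_map2_eq => [/eq_s|/eq_t] ->.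
Qed.

End Swap.

Lemma lev_swapK (Q : quiver) (v w : vert Q) (vw : v != w) (wv : w != v)
    (bv av bw aw : arr Q) (kv kw : bool) :
  cancel (lev_swap (lev_old vw : vert (levee w bw aw))
                   (lev_old wv : vert (levee v bv av)) kv kw)
         (lev_swap (lev_old wv : vert (levee v bv av))
                   (lev_old vw : vert (levee w bw aw)) kw kv).
Proof.
move=> p; have [u [s [t ->]]] := lev_map2_surj p.
by rewrite !lev_swap_map2E !addbK.
Qed.

Lemma leveeZ2E (Q : quiver) (Z : rel (arr Q)) (v w : vert Q) (vw : v != w)
    (b a b' a' m n : arr Q) :
  leveeZ (Q := levee w b a) (leveeZ Z w b a) (lev_old vw) b' a' m n
  = [&& Z m n, qtail m != w & qtail m != v].
Proof. by rewrite /leveeZ /= lev_map_eq_old andbA. Qed.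

Theorem lemma2p11 (Q : quiver) (Z : rel (arr Q)) (v w : vert Q)
  (hLG : locally_gentle Z) (hvw : v != w) (hwv : w != v)
  (* chosen relation  bv av  in Z at v, and  bw aw  at w *)
  (bv av : arr Q) (hZv : Z bv av) (htv : qtail bv = v) (hhv : qhead av = v)
  (bw aw : arr Q) (hZw : Z bw aw) (htw : qtail bw = w) (hhw : qhead aw = w)
  (* x = v^w in Q^w, with a chosen relation bx ax in Z^w at x *)
  (bx ax : arr (levee w bw aw))
  (hZx : leveeZ Z w bw aw bx ax)
  (htx : qtail bx = (lev_old hvw : vert (levee w bw aw)))
  (hhx : qhead ax = (lev_old hvw : vert (levee w bw aw)))
  (* y = w^v in Q^v, with a chosen relation by ay in Z^v at y *)
  (by_ ay : arr (levee v bv av))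
  (hZy : leveeZ Z v bv av by_ ay)
  (hty : qtail by_ = (lev_old hwv : vert (levee v bv av)))
  (hhy : qhead ay = (lev_old hwv : vert (levee v bv av))) :
  exists (fV : vert (levee (Q := levee w bw aw) (lev_old hvw) bx ax) ->
               vert (levee (Q := levee v bv av) (lev_old hwv) by_ ay))
         (fA : arr (levee (Q := levee w bw aw) (lev_old hvw) bx ax) ->
               arr (levee (Q := levee v bv av) (lev_old hwv) by_ ay)),
    quiver_iso fV fA /\
    forall m n,
      leveeZ (Q := levee v bv av) (leveeZ Z v bv av) (lev_old hwv) by_ ay
        (fA m) (fA n)
      = leveeZ (Q := levee w bw aw) (leveeZ Z w bw aw) (lev_old hvw) bx ax m n.
Proof.
have /andP[Zx _] := hZx; have /andP[Zy _] := hZy.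
have tx : qtail (q := Q) bx = v := eq_lev_map_old htx.
have hx : qhead (q := Q) ax = v := eq_lev_map_old hhx.
have ty : qtail (q := Q) by_ = w := eq_lev_map_old hty.
have hy : qhead (q := Q) ay = w := eq_lev_map_old hhy.
exists (lev_swap _ _ (ax != av) (aw != ay)), id; split; first split.
- by exists (lev_swap _ _ (aw != ay) (ax != av)); apply: lev_swapK.
- by exists id.
- move=> e; symmetry; apply: lev_swap_map2 => he.
    exact (gentle_head_flag hLG hZw Zy hhw hy he).
  exact (gentle_head_flag hLG Zx hZv hx hhv he).
- move=> e; symmetry; apply: lev_swap_map2 => he.
    exact (gentle_tail_flag hLG hZw Zy htw ty he).
  exact (gentle_tail_flag hLG Zx hZv tx htv he).
- by move=> m n; rewrite !leveeZ2E (andbC (_ != v)).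
Qed.
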